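(* Let $\alpha,\beta:\mathbb{R}[x]\to\mathbb{R}$ be the linear functionals defined by $\alpha(1)=0$, $\alpha(x)=1$, $\alpha(x^n)=0$ for $n\ge2$, and $\beta(1)=1$, $\beta(x)=0$, $\beta(x^n)=0$ for $n\ge2$. Let $P(x)=x(x+1)(x-1)$, $R(x)=x^2-\tfrac14$, and $T[f]=\alpha(f)P+\beta(f)R$. Then $T$ is a hyperbolicity preserver.
   Context: A linear operator $T:\mathbb{R}[x]\to\mathbb{R}[x]$ is a hyperbolicity preserver if $T[p]$ has only real zeros whenever $p\in\mathbb{R}[x]$ has only real zeros. *)

(* Real numbers are modelled by an arbitrary real closed
   field R (rcfType); complex numbers by pairs (a, b) standing for a + b i. *)
From HB Require Import structures.
From mathcomp Require Import all_boot all_order all_algebra.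
Set Implicit Arguments. Unset Strict Implicit. Unset Printing Implicit Defensive.
Import Order.TTheory GRing.Theory Num.Theory.
Local Open Scope ring_scope.

(* Evaluation of a real polynomial at the complex number a + b i (Horner),
   returning (real part, imaginary part). *)
Definition ceval (R : rcfType) (p : {poly R}) (a b : R) : R * R :=
  foldr (fun c uv => (uv.1 * a - uv.2 * b + c, uv.1 * b + uv.2 * a))
        (0, 0) (polyseq p).

(* p has only real zeros (the zero polynomial is counted as hyperbolic,
   as is standard in the Polya-Schur / Borcea-Branden literature). *)
Definition hyperbolic (R : rcfType) (p : {poly R}) : Prop :=
  p = 0 \/ forall a b : R, ceval p a b = (0, 0) -> b = 0.

Definition hyperbolicity_preserver (R : rcfType) (T : {poly R} -> {poly R}) : Prop :=
  (forall (c : R) (p q : {poly R}), T (c *: p + q) = c *: T p + T q) /\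
  (forall p : {poly R}, hyperbolic p -> hyperbolic (T p)).

Definition alphaF (R : rcfType) (f : {poly R}) : R := f`_1.
Definition betaF (R : rcfType) (f : {poly R}) : R := f`_0.

Definition Ppoly (R : rcfType) : {poly R} := 'X * ('X + 1) * ('X - 1).
Definition Rpoly (R : rcfType) : {poly R} := 'X^2 - (4%:R)^-1%:P.

Definition Top (R : rcfType) (f : {poly R}) : {poly R} :=
  alphaF f *: Ppoly R + betaF f *: Rpoly R.

(* If Im (p(z) * conj q(z)) <> 0 for every non-real z, then p(z) and q(z) are
   linearly independent over the reals there, so no non-trivial real
   combination a p + b q vanishes off the real line.  For P = x^3 - x and
   R = x^2 - 1/4, whose zeros interlace,
     Im (P(z) * conj R(z)) = Im z * (|z|^4 + (Re z^2 + 5 Im z^2 + 1) / 4),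
   which is non-zero as soon as Im z is.  Since T f = alpha(f) P + beta(f) R,
   every T f is hyperbolic. *)
From HB Require Import structures.
From mathcomp Require Import all_boot all_order all_algebra.
From mathcomp Require Import ring lra.
Set Implicit Arguments. Unset Strict Implicit. Unset Printing Implicit Defensive.
Import Order.TTheory GRing.Theory Num.Theory.
From mathcomp Require Import complex.
Local Open Scope ring_scope.
Local Open Scope complex_scope.

Section Complexification.
Variable R : rcfType.
Local Notation "p ^C" := (map_poly (real_complex R) p).

Lemma ceval_complex (p : {poly R}) (a b : R) :
  ceval p a b = (Re p^C.[a +i* b], Im p^C.[a +i* b]).
Proof.
rewrite -[p in RHS]polyseqK map_Poly horner_Poly /ceval.
elim: (polyseq p) => //= c s ->.
by case: (horner_rec _ _) => x y; simpc.
Qed.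

Lemma real_comb_eq0 (a b : R) (x y : R[i]) :
  Im (x * y^*) != 0 -> a%:C * x + b%:C * y = 0 -> a = 0 /\ b = 0.
Proof.
case: x y => [x1 x2] [y1 y2]; simpc => /= det /eqP.
rewrite eq_complex /= => /andP[/eqP e1 /eqP e2].
have detE c : c * (- (x1 * y2) + x2 * y1) = 0 -> c = 0.
  by move/eqP; rewrite mulf_eq0 (negbTE det) orbF => /eqP.
split; apply: detE.
  have -> : a * (- (x1 * y2) + x2 * y1) = y1 * (a * x2 + b * y2) - y2 * (a * x1 + b * y1).
    by ring.
  by rewrite e1 e2 !mulr0 subr0.
have -> : b * (- (x1 * y2) + x2 * y1) = x2 * (a * x1 + b * y1) - x1 * (a * x2 + b * y2).
  by ring.
by rewrite e1 e2 !mulr0 subr0.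
Qed.

Lemma hyperbolic_real_comb (p q : {poly R}) :
    (forall z : R[i], Im z != 0 -> Im (p^C.[z] * (q^C.[z])^*) != 0) ->
  forall a b : R, hyperbolic (a *: p + b *: q).
Proof.
move=> pq_indep a b; have [->|nz] := eqVneq (a *: p + b *: q) 0; [by left|right].
move=> u v; rewrite ceval_complex; have [//|v0 [re0 im0]] := eqVneq v 0.
have: (a *: p + b *: q)^C.[u +i* v] = 0.
  by move: re0 im0; case: (_.[_]) => x y /= -> ->.
rewrite rmorphD /= !map_polyZ hornerD !hornerZ.
move=> /(real_comb_eq0 (pq_indep _ _)) [//|a0 b0].
by move: nz; rewrite a0 b0 !scale0r addr0 eqxx.
Qed.

Lemma Im_Ppoly_conj_Rpoly (z : R[i]) :
  Im ((Ppoly R)^C.[z] * ((Rpoly R)^C.[z])^*) =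
  Im z * ((Re z ^+ 2 + Im z ^+ 2) ^+ 2 + (Re z ^+ 2 + 5%:R * Im z ^+ 2 + 1) / 4%:R).
Proof.
rewrite /Ppoly /Rpoly !(rmorphM, rmorphD, rmorphB, rmorphN, rmorph1) /=.
rewrite map_polyX map_polyC !hornerE.
(* [simpc] only computes on literal [_ +i* _] terms. *)
case: z => u v; rewrite -[1 : R[i]]/(1 +i* 0) expr2 /=.
by simpc; rewrite /=; field.
Qed.

Lemma Ppoly_Rpoly_independent (z : R[i]) :
  Im z != 0 -> Im ((Ppoly R)^C.[z] * ((Rpoly R)^C.[z])^*) != 0.
Proof.
move=> Imz_neq0; rewrite Im_Ppoly_conj_Rpoly mulf_neq0 // lt0r_neq0 //.
have := sqr_ge0 (Re z ^+ 2 + Im z ^+ 2); have := sqr_ge0 (Re z); have := sqr_ge0 (Im z).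
lra.
Qed.

End Complexification.

Theorem mainTheorem2 (R : rcfType) : hyperbolicity_preserver (@Top R).
Proof.
split=> [c p q|f _]; last exact/hyperbolic_real_comb/Ppoly_Rpoly_independent.
rewrite /Top /alphaF /betaF !coefD !coefZ !scalerDl !scalerDr !scalerA.
by rewrite addrACA.
Qed.
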